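(* Let $n\ge 4$ and let $D_n$ be the tree on vertex set $\{1,\ldots,n\}$ with edges $\{1,3\}$, $\{2,3\}$ and $\{i,i+1\}$ for $3\le i\le n-1$, with adjacency matrix $A$; let $W(D_n)=[e_n,Ae_n,\ldots,A^{n-1}e_n]$ and let $\hat W(D_n)$ be obtained from $W(D_n)$ by deleting the first row and the last column. Let $B$ be the $(n-1)\times(n-1)$ tridiagonal matrix with zero diagonal, $B_{1,2}=1$, $B_{2,1}=2$, and $B_{i,i+1}=B_{i+1,i}=1$ for $2\le i\le n-2$, all other entries $0$. Then $\hat W(D_n)=W(B)$, where $W(B)=[e_{n-1},Be_{n-1},\ldots,B^{n-2}e_{n-1}]$.
   Context: $e_m$ denotes the all-ones vector of length $m$. For an $m\times m$ matrix $M$, $W(M)=[e_m,Me_m,\ldots,M^{m-1}e_m]$. *)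

From mathcomp Require Import all_boot all_order all_algebra.
Set Implicit Arguments. Unset Strict Implicit. Unset Printing Implicit Defensive.
Import GRing.Theory.
Local Open Scope ring_scope.

(* All indices are 0-based: vertex k of the paper is index k-1 here. *)

(* all-ones column vector e_m *)
Definition ones (m : nat) : 'cV[int]_m := const_mx 1.

Definition Wmx (m : nat) (M : 'M[int]_m) : 'M[int]_m :=
  \matrix_(i < m, j < m) ((M ^+ j) *m ones m) i ord0.

Definition Dn_edge (n : nat) (i j : 'I_n) : bool :=
  [|| [&& (i : nat) == 0%N & (j : nat) == 2%N],
      [&& (i : nat) == 1%N & (j : nat) == 2%N] |
      [&& (2 <= i)%N & (j : nat) == i.+1] ].

Definition Dn_adj (n : nat) : 'M[int]_n :=
  \matrix_(i < n, j < n) ((Dn_edge i j || Dn_edge j i) : int).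

Definition What (m : nat) (W : 'M[int]_m.+1) : 'M[int]_m :=
  \matrix_(i < m, j < m) W (lift ord0 i) (widen_ord (leqnSn m) j).

Definition Bmx (m : nat) : 'M[int]_m :=
  \matrix_(i < m, j < m)
    (if [&& (i : nat) == 0%N & (j : nat) == 1%N] then 1
     else if [&& (i : nat) == 1%N & (j : nat) == 0%N] then 2
     else if [&& (1 <= i)%N & (j : nat) == i.+1] then 1
     else if [&& (1 <= j)%N & (i : nat) == j.+1] then 1
     else 0).

(* Vertices 1 and 2 of D_n are twins: they have the same neighbourhood {3}.
   Hence the vectors with equal first two coordinates form an A-invariant
   subspace containing e_n, on which A acts, in the coordinates 2..n, as B:
   the entry B_{2,1} = 2 records that vertex 3 sees both twins.  Writing
   P for the (n x (n-1)) matrix that duplicates the first coordinate, this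
   says A P = P B, so A^k e_n = A^k P e_(n-1) = P B^k e_(n-1), and deleting
   the first coordinate gives B^k e_(n-1). *)

From mathcomp Require Import all_boot all_order all_algebra.
Set Implicit Arguments. Unset Strict Implicit. Unset Printing Implicit Defensive.
Local Open Scope ring_scope.
Import GRing.Theory.

Section TwinQuotient.

Variables (R : pzRingType) (p : nat).

Definition dup_first : 'M[R]_(p.+2, p.+1) := \matrix_(k, j) (j == k.-1 :> nat)%:R.

Lemma dup_first_mulmx_lift q (W : 'M[R]_(p.+1, q)) i j :
  (dup_first *m W) (lift ord0 i) j = W i j.
Proof.
rewrite mxE (bigD1 i) //= big1 ?addr0 => [|l]; rewrite mxE lift0 /=.
  by rewrite eqxx mul1r.
by rewrite -val_eqE => /negbTE /= ->; rewrite mul0r.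
Qed.

Lemma dup_first_mulmx0 q (W : 'M[R]_(p.+1, q)) j :
  (dup_first *m W) ord0 j = W ord0 j.
Proof.
rewrite -(dup_first_mulmx_lift W ord0 j) !mxE.
by apply: eq_bigr => l _; rewrite !mxE.
Qed.

Lemma dup_first_mul_const q (a : R) :
  dup_first *m const_mx a = const_mx a :> 'M_(p.+2, q).
Proof.
apply/matrixP => k j.
by case: (unliftP ord0 k) => [i|] ->; rewrite ?dup_first_mulmx_lift ?dup_first_mulmx0 !mxE.
Qed.

Lemma mulmx_dup_first m (M : 'M[R]_(m, p.+2)) i j :
  (M *m dup_first) i j = M i (lift ord0 j) + (j == ord0)%:R * M i ord0.
Proof.
rewrite mxE big_ord_recl addrC; congr (_ + _); last by rewrite mxE mulr_natr mulr_natl.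
rewrite (bigD1 j) //= big1 ?addr0 => [|l]; rewrite mxE lift0 /=.
  by rewrite eqxx mulr1.
by rewrite eq_sym -val_eqE => /negbTE /= ->; rewrite mulr0.
Qed.

Variables (A : 'M[R]_p.+2) (B : 'M[R]_p.+1).
Hypothesis twin_rows : row ord0 A = row (lift ord0 ord0) A.
Hypothesis quotient : B = row' ord0 A *m dup_first.

Lemma mulmx_dup_first_comm : A *m dup_first = dup_first *m B.
Proof.
have quotient_lift i j : (A *m dup_first) (lift ord0 i) j = B i j.
  by rewrite quotient !mxE; apply: eq_bigr => l _; rewrite [row' _ _ _ _]mxE.
apply/matrixP => k j; case: (unliftP ord0 k) => [i|] ->.
  by rewrite dup_first_mulmx_lift quotient_lift.
have twin l : A ord0 l = A (lift ord0 ord0) l.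
  by have /rowP/(_ l) := twin_rows; rewrite !mxE.
rewrite dup_first_mulmx0 -quotient_lift !mxE.
by apply: eq_bigr => l _; rewrite twin.
Qed.

Lemma exp_mulmx_dup_first_comm k : A ^+ k *m dup_first = dup_first *m B ^+ k.
Proof.
elim: k => [|k IHk]; first by rewrite !expr0 mul1mx mulmx1.
by rewrite !exprS -mulmxA IHk mulmxA mulmx_dup_first_comm -mulmxA.
Qed.

End TwinQuotient.

Lemma What_Wmx_twin p (A : 'M[int]_p.+2) (B : 'M[int]_p.+1) :
  row ord0 A = row (lift ord0 ord0) A -> B = row' ord0 A *m dup_first _ p ->
  What (Wmx A) = Wmx B.
Proof.
move=> twin_rows quotient.
have W_dup k : A ^+ k *m ones p.+2 = dup_first _ p *m (B ^+ k *m ones p.+1).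
  rewrite -[ones p.+2]dup_first_mul_const mulmxA.
  by rewrite (exp_mulmx_dup_first_comm twin_rows quotient) mulmxA.
apply/matrixP => i j; rewrite mxE [Wmx A _ _]mxE [RHS]mxE.
by rewrite W_dup dup_first_mulmx_lift.
Qed.

Lemma Dn_adj_twin_rows p : row ord0 (Dn_adj p.+2) = row (lift ord0 ord0) (Dn_adj p.+2).
Proof.
apply/rowP => l; rewrite !mxE /Dn_edge lift0 /=.
by case: (nat_of_ord l) => [|[|[|b]]].
Qed.

Lemma Bmx_quotient p : Bmx p.+1 = row' ord0 (Dn_adj p.+2) *m dup_first _ p.
Proof.
apply/matrixP => i j; rewrite mulmx_dup_first !mxE /Dn_edge !lift0 -val_eqE /=.
case: (nat_of_ord i) => [|[|a]]; case: (nat_of_ord j) => [|[|b]] //=.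
all: try by case: a.
all: try by case: b.
rewrite !eqSS mul0r addr0.
by case: (eqVneq b a.+1) => //= _; case: (a == b.+1).
Qed.

Theorem lemma2p1 (m : nat) (hm : (3 <= m)%N) :
  What (Wmx (Dn_adj m.+1)) = Wmx (Bmx m).
Proof.
case: m hm => [//|p] _.
exact: What_Wmx_twin (Dn_adj_twin_rows p) (Bmx_quotient p).
Qed.
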